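(* Let $\mathcal{P}=(P_1,\dots,P_n)$ be convex polytopes in $\mathbb{R}^d$ each containing the origin, let $\mu\in\mathbb{R}^d$, and let $\Delta=\Delta(\mathcal{P};\mu)$. Suppose there is a line $\ell$ through $\mu$ that does not intersect $P_\sigma$ for any $\sigma\in\Delta$. Then $\mathrm{ctd}(\Delta)<d$.
   Context: For $\sigma\subseteq[n]$ write $P_\sigma=\sum_{i\in\sigma}P_i$ (Minkowski sum), with $P_\emptyset=\{0\}$; the Minkowski complex $\Delta(\mathcal{P};\mu)$ is the simplicial complex on vertex set $[n]$ whose faces are the $\sigma\subseteq[n]$ with $\mu\notin P_\sigma$. The convex threshold dimension $\mathrm{ctd}(\Delta)$ of a simplicial complex $\Delta$ on vertex set $[n]$ is the smallest $d$ such that $\Delta=\Delta(\mathcal{Q};\nu)$ for some family $\mathcal{Q}=(Q_1,\dots,Q_n)$ of convex bodies (equivalently, convex polytopes) in $\mathbb{R}^d$ containing the origin and some $\nu\in\mathbb{R}^d$. *)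

From HB Require Import structures.
From mathcomp Require Import all_boot all_order all_algebra.
From mathcomp Require Import reals.
Set Implicit Arguments. Unset Strict Implicit. Unset Printing Implicit Defensive.
Import Order.TTheory GRing.Theory Num.Theory.
Local Open Scope ring_scope.

Definition conv_hull (R : realType) (d : nat) (s : seq 'rV[R]_d) : 'rV[R]_d -> Prop :=
  fun x => exists w : 'I_(size s) -> R,
    (forall i, 0 <= w i) /\ \sum_(i < size s) w i = 1 /\
    x = \sum_(i < size s) w i *: s`_i.

Definition is_polytope (R : realType) (d : nat) (P : 'rV[R]_d -> Prop) : Prop :=
  exists s : seq 'rV[R]_d, forall x, P x <-> conv_hull s x.

(* Minkowski sum P_sigma = sum_{i in sigma} P_i, with P_emptyset = {0}. *)
Definition mink_sum (R : realType) (d n : nat) (P : 'I_n -> 'rV[R]_d -> Prop)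
  (sigma : {set 'I_n}) : 'rV[R]_d -> Prop :=
  fun x => exists y : 'I_n -> 'rV[R]_d,
    (forall i, i \in sigma -> P i (y i)) /\ x = \sum_(i in sigma) y i.

Definition mink_face (R : realType) (d n : nat) (P : 'I_n -> 'rV[R]_d -> Prop)
  (mu : 'rV[R]_d) (sigma : {set 'I_n}) : Prop :=
  ~ mink_sum P sigma mu.

Definition mink_representable (R : realType) (n : nat)
  (Delta : {set 'I_n} -> Prop) (e : nat) : Prop :=
  exists (Q : 'I_n -> 'rV[R]_e -> Prop) (nu : 'rV[R]_e),
    (forall i, is_polytope (Q i) /\ Q i 0) /\
    (forall sigma, Delta sigma <-> mink_face Q nu sigma).

(* ctd(Delta) < d  iff  Delta is representable in some dimension e < d. *)
Definition ctd_lt (R : realType) (n : nat) (Delta : {set 'I_n} -> Prop) (d : nat) : Prop :=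
  exists e : nat, (e < d)%N /\ mink_representable R Delta e.

(* Project R^d linearly onto R^(d-1) along the direction v of the line.
   Linear images of polytopes are polytopes and linear maps commute with
   Minkowski sums, so the projected polytopes with the projected point f(mu)
   define a Minkowski complex in dimension d-1.  Its faces are the sigma
   whose P_sigma misses the fibre of f over f(mu), which is the line itself:
   every face of Delta does so by hypothesis, and a non-face contains mu. *)

From HB Require Import structures.
From mathcomp Require Import all_boot all_order all_algebra.
From mathcomp Require Import reals ring.
Set Implicit Arguments. Unset Strict Implicit. Unset Printing Implicit Defensive.
Import Order.TTheory GRing.Theory Num.Theory.
Local Open Scope ring_scope.

Section LinearImage.
Variables (R : realType) (d e : nat) (f : {linear 'rV[R]_d -> 'rV[R]_e}).

Definition lin_image (P : 'rV[R]_d -> Prop) : 'rV[R]_e -> Prop :=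
  fun y => exists2 x, P x & y = f x.

Lemma conv_hull_map (s : seq 'rV[R]_d) y :
  conv_hull (map f s) y <-> lin_image (conv_hull s) y.
Proof.
rewrite /conv_hull size_map; split.
  move=> [w [w0 [w1 ->]]]; exists (\sum_(i < size s) w i *: s`_i).
    by exists w.
  by rewrite linear_sum; apply: eq_bigr => i _; rewrite linearZ (nth_map 0).
move=> [_ [w [w0 [w1 ->]]] ->]; exists w; split => //; split => //.
by rewrite linear_sum; apply: eq_bigr => i _; rewrite linearZ (nth_map 0).
Qed.

Lemma is_polytope_lin_image P : is_polytope P -> is_polytope (lin_image P).
Proof.
move=> [s Hs]; exists (map f s) => y; rewrite conv_hull_map.
by split=> -[x Px ->]; exists x => //; apply/Hs.
Qed.

Lemma mink_sum_lin_image n (P : 'I_n -> 'rV[R]_d -> Prop) sigma y :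
  mink_sum (fun i => lin_image (P i)) sigma y <-> lin_image (mink_sum P sigma) y.
Proof.
split.
  move=> [z [Hz ->]].
  have /boolp.choice [x Hx] :
      forall i, exists x, i \in sigma -> P i x /\ z i = f x.
    move=> i; have [/Hz [x Px ->]|_] := boolP (i \in sigma); last by exists 0.
    by exists x.
  exists (\sum_(i in sigma) x i); first by exists x; split => // i /Hx[].
  by rewrite linear_sum; apply: eq_bigr => i /Hx[].
move=> [_ [x [Hx ->]] ->]; exists (fun i => f (x i)); split.
  by move=> i /Hx Px; exists (x i).
by rewrite linear_sum.
Qed.

Variables (n : nat) (P : 'I_n -> 'rV[R]_d -> Prop) (mu : 'rV[R]_d).

Lemma mink_face_lin_image sigma :
  (mink_face P mu sigma -> forall x, mink_sum P sigma x -> f x <> f mu) ->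
  mink_face (fun i => lin_image (P i)) (f mu) sigma <-> mink_face P mu sigma.
Proof.
move=> avoid; split => [face mu_in|face].
  by apply: face; apply/mink_sum_lin_image; exists mu.
by move=> /mink_sum_lin_image [x Px /esym]; apply: avoid.
Qed.

Lemma mink_representable_lin_image :
  (forall i, is_polytope (P i) /\ P i 0) ->
  (forall sigma, mink_face P mu sigma ->
     forall x, mink_sum P sigma x -> f x <> f mu) ->
  mink_representable R (mink_face P mu) e.
Proof.
move=> HP avoid; exists (fun i => lin_image (P i)), (f mu); split.
  move=> i; have [polP P0] := HP i; split; first exact: is_polytope_lin_image.
  by exists 0; last rewrite linear0.
by move=> sigma; rewrite mink_face_lin_image //; exact: avoid.
Qed.

End LinearImage.

Section ProjectionAlongLine.
Variables (R : realType) (e : nat) (v : 'rV[R]_e.+1) (k : 'I_e.+1).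

(* Subtract the multiple of [v] that cancels coordinate [k], then drop that
   coordinate; the kernel is the line spanned by [v]. *)
Definition proj_along (x : 'rV[R]_e.+1) : 'rV[R]_e :=
  \row_j (x 0 (lift k j) - x 0 k / v 0 k * v 0 (lift k j)).

Fact proj_along_is_linear : linear proj_along.
Proof. by move=> a x y; apply/rowP => j; rewrite !mxE; ring. Qed.

HB.instance Definition _ :=
  GRing.isLinear.Build R _ _ _ proj_along proj_along_is_linear.

Hypothesis vk_neq0 : v 0 k != 0.

Lemma proj_along_eq0 x : proj_along x = 0 -> x = (x 0 k / v 0 k) *: v.
Proof.
move=> /rowP x0; apply/rowP => j; rewrite mxE.
have [j' ->|->] := unliftP k j; last by rewrite divfK.
by have := x0 j'; rewrite !mxE => /eqP; rewrite subr_eq0 => /eqP.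
Qed.

Lemma proj_along_eq x y : proj_along x = proj_along y -> exists t, x = y + t *: v.
Proof.
move=> /eqP; rewrite -subr_eq0 -linearB => /eqP /proj_along_eq0 xy.
by exists ((x - y) 0 k / v 0 k); rewrite -xy addrC subrK.
Qed.

End ProjectionAlongLine.

Theorem lemma6 (R : realType) (d n : nat) (P : 'I_n -> 'rV[R]_d -> Prop)
  (mu : 'rV[R]_d) :
  (forall i, is_polytope (P i) /\ P i 0) ->
  (exists v : 'rV[R]_d, v != 0 /\
     forall sigma : {set 'I_n}, mink_face P mu sigma ->
       forall t : R, ~ mink_sum P sigma (mu + t *: v)) ->
  ctd_lt R (mink_face P mu) d.
Proof.
case: d => [|e] in P mu * => HP [v [/matrix0Pn [i0 [k +]] line_avoids]].
  by case: k.
rewrite ord1 => vk_neq0.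
exists e; split => //.
apply: (@mink_representable_lin_image _ _ _ (proj_along v k)) => // sigma face x Px.
move=> /(proj_along_eq vk_neq0) [t xE].
by apply: (line_avoids sigma face t); rewrite -xE.
Qed.
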